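(* Let $\Gamma$ be a connected finite simplicial graph with at least three vertices. Suppose there is a collection $\mathcal{G}$ of induced subgraphs $\Delta\subset\Gamma$ satisfying both of the following: (1) for each $\Delta\in\mathcal{G}$, $A(\Delta)$ has property $\mathbf{F}(\mathcal{H})$; (2) each two-edge segment of $\Gamma$ is contained in some $\Delta\in\mathcal{G}$. Then $A(\Gamma)$ has property $\mathbf{F}(\mathcal{H})$, where $\mathcal{H}=\{F_2,\mathbb{Z}^2\}$.
   Context: $A(\Gamma)$ is the right-angled Artin group of $\Gamma$: it is generated by the vertices of $\Gamma$, with relations that adjacent vertices commute. For an induced subgraph $\Delta$, $A(\Delta)$ is the subgroup generated by the vertices of $\Delta$. A subgraph is induced if it contains every edge of $\Gamma$ between two of its vertices. A two-edge segment is a subgraph consisting of vertices $u,v,w$ with $u\ne w$, an edge $uv$ and an edge $vw$. All actions on trees are simplicial and without inversions. A group $G$ has property $\mathbf{F}(\mathcal{H})$ if, whenever $G$ acts on a tree, either there is a global fixed point or some subgroup of $G$ isomorphic to $F_2$ or to $\mathbb{Z}^2$ fixes an edge. *)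

From mathcomp Require Import all_boot.
From Stdlib Require Import ZArith List.

Set Implicit Arguments.
Unset Strict Implicit.
Unset Printing Implicit Defensive.

Record grp := Grp {
  gcar :> Type;
  gmul : gcar -> gcar -> gcar;
  gone : gcar;
  ginv : gcar -> gcar;
  gmulA : forall x y z, gmul x (gmul y z) = gmul (gmul x y) z;
  gmul1 : forall x, gmul gone x = x;
  gmulV : forall x, gmul (ginv x) x = gone }.

Definition is_hom (G H : grp) (phi : G -> H) : Prop :=
  forall x y, phi (gmul x y) = gmul (phi x) (phi y).

Fixpoint gpow (G : grp) (g : G) (n : nat) : G :=
  match n with O => gone G | S n' => gmul g (gpow g n') end.

Definition zpow (G : grp) (g : G) (z : Z) : G :=
  if (z <? 0)%Z then ginv (gpow g (Z.abs_nat z)) else gpow g (Z.abs_nat z).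

Inductive gen (G : grp) (S : G -> Prop) : G -> Prop :=
  | gen_in x : S x -> gen S x
  | gen_one : gen S (gone G)
  | gen_mul x y : gen S x -> gen S y -> gen S (gmul x y)
  | gen_inv x : gen S x -> gen S (ginv x).

(* words in a, b: a letter is (is_b, inverted) *)
Definition letter_val (G : grp) (a b : G) (l : bool * bool) : G :=
  let g := if l.1 then b else a in if l.2 then ginv g else g.

Fixpoint word_val (G : grp) (a b : G) (w : list (bool * bool)) : G :=
  match w with nil => gone G | l :: w' => gmul (letter_val a b l) (word_val a b w') end.

Fixpoint reduced_word (w : list (bool * bool)) : Prop :=
  match w with
  | l1 :: ((l2 :: _) as w') => ~ (l1.1 = l2.1 /\ l1.2 = negb l2.2) /\ reduced_word w'
  | _ => True
  end.

(* a, b freely generate the subgroup <a,b>, i.e. <a,b> is isomorphic to F_2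
   via the basis a, b *)
Definition free_pair (G : grp) (a b : G) : Prop :=
  forall w, w <> nil -> reduced_word w -> word_val a b w <> gone G.

(* a, b form a basis of <a,b> as a free abelian group, i.e. <a,b> ~= Z^2 *)
Definition free_abelian_pair (G : grp) (a b : G) : Prop :=
  gmul a b = gmul b a /\
  forall m n : Z, gmul (zpow a m) (zpow b n) = gone G -> m = 0%Z /\ n = 0%Z.

Fixpoint chain (T : Type) (E : T -> T -> Prop) (x : T) (l : list T) : Prop :=
  match l with nil => True | y :: l' => E x y /\ chain E y l' end.

Definition is_tree (T : Type) (E : T -> T -> Prop) : Prop :=
  inhabited T /\
  (forall x y, E x y -> E y x) /\
  (forall x, ~ E x x) /\
  (forall x y, exists l, chain E x l /\ List.last l x = y) /\
  ~ (exists x l, 2 <= List.length l /\ List.NoDup (x :: l) /\ chain E x l /\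
                 E (List.last l x) x).

(* act restricted to the subgroup S is a simplicial action without inversions *)
Definition tree_action (G : grp) (S : G -> Prop) (T : Type) (E : T -> T -> Prop)
    (act : G -> T -> T) : Prop :=
  (forall x, act (gone G) x = x) /\
  (forall g h x, S g -> S h -> act (gmul g h) x = act g (act h x)) /\
  (forall g x y, S g -> (E x y <-> E (act g x) (act g y))) /\
  (forall g x y, S g -> E x y -> ~ (act g x = y /\ act g y = x)).

Definition property_F (G : grp) (S : G -> Prop) : Prop :=
  forall (T : Type) (E : T -> T -> Prop) (act : G -> T -> T),
    is_tree E -> tree_action S E act ->
    (exists x, forall g, S g -> act g x = x) \/
    (exists a b x y, S a /\ S b /\ E x y /\
       (free_pair a b \/ free_abelian_pair a b) /\
       act a x = x /\ act a y = y /\ act b x = x /\ act b y = y).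

(* (G, iota) is the RAAG of the graph (V, adj): universal property *)
Definition is_RAAG (V : Type) (adj : V -> V -> bool) (G : grp) (iota : V -> G) : Prop :=
  (forall u v, adj u v -> gmul (iota u) (iota v) = gmul (iota v) (iota u)) /\
  forall (H : grp) (f : V -> H),
    (forall u v, adj u v -> gmul (f u) (f v) = gmul (f v) (f u)) ->
    (exists phi : G -> H, is_hom phi /\ forall v, phi (iota v) = f v) /\
    (forall phi psi : G -> H, is_hom phi -> is_hom psi ->
       (forall v, phi (iota v) = f v) -> (forall v, psi (iota v) = f v) ->
       forall g, phi g = psi g).

Definition A_sub (V : finType) (G : grp) (iota : V -> G) (D : {set V}) : G -> Prop :=
  gen (fun g => exists v, v \in D /\ g = iota v).

(* Assume no copy of F_2 or Z^2 fixes an edge.  Then each A(Delta) with Delta in the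
   collection fixes a vertex of the tree, so the generators of every two-edge segment
   have a common fixed vertex.  Adjacent generators span a Z^2, so they have at most
   one common fixed vertex: two would force a fixed edge on the geodesic between them.
   Hence segments sharing an edge have the same fixed vertex, and by connectedness all
   generators fix the same vertex. *)

From mathcomp Require Import all_boot.
From Stdlib Require Import Classical ZArith Lia.
From Stdlib Require List.

Set Implicit Arguments.
Unset Strict Implicit.
Unset Printing Implicit Defensive.

Section Chains.
Variables (T : Type) (E : T -> T -> Prop).

Lemma lastE (l : seq T) x : List.last l x = last x l.
Proof. by elim: l x => [|a l IH] x //=; case: l IH => //= b l ->. Qed.

Lemma chain_cat x l1 l2 :
  chain E x (l1 ++ l2) <-> chain E x l1 /\ chain E (last x l1) l2.
Proof. by elim: l1 x => [|y l1 IH] x /=; [tauto | rewrite IH; tauto]. Qed.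

Lemma chain_map (f : T -> T) x l : (forall u v, E u v -> E (f u) (f v)) ->
  chain E x l -> chain E (f x) (map f l).
Proof. by move=> fE; elim: l x => [|y l IH] x //= [/fE ? /IH]. Qed.

Lemma chain_uniq x l : chain E x l -> exists l',
  [/\ chain E x l', last x l' = last x l, List.NoDup (x :: l') & List.incl l' l].
Proof.
elim: l x => [|y l IH] x /=.
  by move=> _; exists [::]; split=> //; constructor=> //; constructor.
case=> Exy /IH [l' [Cl' Ll' Ul' Il']].
case: (classic (List.In x (y :: l'))) => [Hin | Hnin].
  have [p1 [p2 def_l']] := List.in_split _ _ Hin.
  have Cyl' : chain E x (y :: l') by [].
  rewrite def_l' in Cyl' Ul'; case/chain_cat: Cyl' => _ [_ Cp2].
  exists p2; split=> //.
  - by rewrite -Ll' -[last y l']/(last x (y :: l')) def_l' last_cat.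
  - exact: List.NoDup_app_remove_l Ul'.
  move=> z z_p2; have: List.In z (y :: l').
    by rewrite def_l'; apply: List.in_or_app; right; right.
  by case=> [-> | /Il']; [left | right].
exists (y :: l'); split=> //; first by constructor.
exact: List.incl_cons (List.in_eq _ _) (List.incl_tl _ Il').
Qed.

Definition linked_avoiding (x a b : T) :=
  exists l, [/\ chain E a l, last a l = b & ~ List.In x l].

Lemma linked_edge x a b : E a b -> b <> x -> linked_avoiding x a b.
Proof. by move=> Eab bx; exists [:: b]; split=> //; case=> // /esym. Qed.

Lemma linked_trans x a b c :
  linked_avoiding x a b -> linked_avoiding x b c -> linked_avoiding x a c.
Proof.
case=> l1 [C1 L1 N1] [l2 [C2 L2 N2]]; exists (l1 ++ l2); split.
- by apply/chain_cat; rewrite L1.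
- by rewrite last_cat L1.
- by move=> /(List.in_app_or l1 l2 x) [].
Qed.

Lemma linked_sym x a b : (forall u v, E u v -> E v u) -> a <> x ->
  linked_avoiding x a b -> linked_avoiding x b a.
Proof.
move=> Esym ax [l [Cl <- Nl]].
elim: l a ax Cl Nl => [|c l IH] a ax /=; first by exists [::].
case=> Eac Cl Nl; have cx : c <> x by move=> cx; apply: Nl; left.
have back : linked_avoiding x (last c l) c by apply: IH => // ?; apply: Nl; right.
exact: linked_trans back (linked_edge (Esym _ _ Eac) ax).
Qed.

End Chains.

Section Trees.
Variables (T : Type) (E : T -> T -> Prop).
Hypothesis tree_E : is_tree E.

Lemma tree_neighbors_linked_eq x a b :
  E x a -> E x b -> linked_avoiding E x a b -> a = b.
Proof.
case: tree_E => _ [Esym [Eirr [_ acyclic]]] Exa Exb [l [Cl Ll Nl]].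
apply: NNPP => ab; have [l' [Cl' Ll' Ul' Il']] := chain_uniq Cl.
case: l' Cl' Ll' Ul' Il' => [|c l'] Cl' Ll' Ul' Il'; first by apply: ab; rewrite -Ll.
apply: acyclic; exists x, [:: a, c & l']; do !split=> //.
- constructor=> //; case=> [ax | /Il'/Nl //]; by apply: (Eirr x); rewrite -{2}ax.
- by rewrite lastE -[last x _]/(last a (c :: l')) Ll' Ll; apply: Esym.
Qed.

(* The first step of a path from x to y without repeated vertices is fixed by every
   automorphism fixing x and y: otherwise it and its image would be two neighbours of x
   joined by a path avoiding x. *)
Lemma tree_fixed_first_step x y : x <> y -> exists x1, E x x1 /\
  forall f : T -> T, injective f -> (forall u v, E u v -> E (f u) (f v)) ->
    f x = x -> f y = y -> f x1 = x1.
Proof.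
case: (tree_E) => _ [Esym [_ [connected _]]] xy.
have [l [Cl Ly]] := connected x y; rewrite lastE in Ly.
have [l' [Cl' Ll' Ul' _]] := chain_uniq Cl.
case: l' Cl' Ll' Ul' => [|x1 rest] /=; first by move=> _ Lx; case: xy; rewrite Lx.
case=> Exx1 Crest Lrest /List.NoDup_cons_iff [Nx _].
exists x1; split=> // f f_inj fE fx fy.
have x1x : x1 <> x by move=> x1x; apply: Nx; left.
have x1_y : linked_avoiding E x x1 y.
  by exists rest; split=> //; [rewrite Lrest | move=> ?; apply: Nx; right].
have fx1_y : linked_avoiding E x (f x1) y.
  exists (map f rest); split; first exact: chain_map.
    by rewrite last_map Lrest Ly.
  case/List.in_map_iff=> z [fz z_rest]; apply: Nx; right.
  by rewrite -(f_inj z x) // fx.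
apply/esym/(tree_neighbors_linked_eq Exx1); first by rewrite -fx; apply: fE.
apply: linked_trans x1_y (linked_sym Esym _ fx1_y).
by rewrite -fx => /f_inj.
Qed.

End Trees.

Lemma gen_mono (G : grp) (X Y : G -> Prop) :
  (forall g, X g -> Y g) -> forall g, gen X g -> gen Y g.
Proof.
by move=> XY g; elim=> *; [apply/gen_in/XY | apply: gen_one | apply: gen_mul | apply: gen_inv].
Qed.

Lemma tree_action_sub (G : grp) (S S' : G -> Prop) (T : Type) (E : T -> T -> Prop)
    (act : G -> T -> T) :
  (forall g, S' g -> S g) -> tree_action S E act -> tree_action S' E act.
Proof.
move=> S'S [act1 [actM [actE act_inv]]].
split=> //; split; [|split] => *; [apply: actM | apply: actE | apply: act_inv]; auto.
Qed.

Section GeneratedAction.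
Variables (G : grp) (X : G -> Prop) (T : Type) (E : T -> T -> Prop) (act : G -> T -> T).
Hypothesis act_gen : tree_action (gen X) E act.

Lemma act_ginvK g x : gen X g -> act (ginv g) (act g x) = x.
Proof.
case: act_gen => act1 [actM _] Xg.
by rewrite -actM ?gmulV ?act1 //; apply: gen_inv.
Qed.

Lemma act_inj g : gen X g -> injective (act g).
Proof. by move=> Xg x y /(congr1 (act (ginv g))); rewrite !act_ginvK. Qed.

Lemma gen_fixed p : (forall g, X g -> act g p = p) -> forall g, gen X g -> act g p = p.
Proof.
case: act_gen => act1 [actM _] Xp g.
elim=> {g} [g /Xp // | | g h Xg gp Xh hp | g Xg gp] //.
- by rewrite actM // hp.
- by rewrite -{1}gp act_ginvK.
Qed.

Lemma tree_fixed_edge g h p q : is_tree E -> gen X g -> gen X h -> p <> q ->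
  act g p = p -> act g q = q -> act h p = p -> act h q = q ->
  exists p', [/\ E p p', act g p' = p' & act h p' = p'].
Proof.
move=> tree_E Xg Xh pq gp gq hp hq.
have [p' [Epp' fixed]] := tree_fixed_first_step tree_E pq.
have actE k : gen X k -> forall u v, E u v -> E (act k u) (act k v).
  by case: act_gen => _ [_ [actE _]] Xk u v /(actE k u v Xk).
by exists p'; split=> //; apply: fixed; auto using act_inj.
Qed.

End GeneratedAction.

Definition z2mul (p q : Z * Z) : Z * Z := (p.1 + q.1, p.2 + q.2)%Z.
Definition z2inv (p : Z * Z) : Z * Z := (- p.1, - p.2)%Z.

Lemma z2mulA : forall x y z, z2mul x (z2mul y z) = z2mul (z2mul x y) z.
Proof. by move=> [? ?] [? ?] [? ?]; rewrite /z2mul /=; f_equal; lia. Qed.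

Lemma z2mul0 : forall x, z2mul (0, 0)%Z x = x.
Proof. by move=> [? ?]. Qed.

Lemma z2mulV : forall x, z2mul (z2inv x) x = (0, 0)%Z.
Proof. by move=> [? ?]; rewrite /z2mul /=; f_equal; lia. Qed.

Definition Z2 : grp := Grp z2mulA z2mul0 z2mulV.

Lemma Z2_hom_zpow (H : grp) (phi : H -> Z2) : is_hom phi ->
  forall g m, phi (zpow g m) = (m * (phi g).1, m * (phi g).2)%Z.
Proof.
move=> phiM.
have phi1 : phi (gone H) = (0, 0)%Z.
  move: (phiM (gone H) (gone H)); rewrite gmul1.
  by case: (phi _) => a b [? ?]; f_equal; lia.
have phiV g : phi (ginv g) = z2inv (phi g).
  move: (phiM (ginv g) g); rewrite gmulV phi1.
  by case: (phi (ginv g)) (phi g) => a b [c d] [? ?]; rewrite /z2inv /=; f_equal; lia.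
have phiX g n : phi (gpow g n) = (Z.of_nat n * (phi g).1, Z.of_nat n * (phi g).2)%Z.
  elim: n => [|n IH]; first exact: phi1.
  rewrite [gpow _ _]/= phiM IH Nat2Z.inj_succ; rewrite /= /z2mul /=.
  by f_equal; lia.
move=> g m; rewrite /zpow; case: Z.ltb_spec => m0.
  by rewrite phiV phiX /z2inv /=; f_equal; lia.
by rewrite phiX; f_equal; lia.
Qed.

(* The generators of adjacent vertices map onto a basis of Z^2, which detects
   every relation a^m b^n = 1. *)
Lemma raag_adj_free_abelian (V : finType) (adj : rel V) (G : grp) (iota : V -> G) u v :
  irreflexive adj -> is_RAAG adj iota -> adj u v -> free_abelian_pair (iota u) (iota v).
Proof.
move=> adj_irr [iotaC univ] uv; split; first exact: iotaC.
have vu : (v == u) = false by apply/eqP=> vu; rewrite vu adj_irr in uv.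
pose f w : Z2 := if w == u then (1, 0)%Z else if w == v then (0, 1)%Z else (0, 0)%Z.
have fC a b : adj a b -> gmul (f a) (f b) = gmul (f b) (f a).
  by move=> _; rewrite /= /z2mul; f_equal; lia.
have [[phi [phiM phi_iota]] _] := univ Z2 f fC.
move=> m n /(congr1 phi); rewrite phiM !Z2_hom_zpow // !phi_iota /f eqxx vu eqxx.
have -> : phi (gone G) = (0, 0)%Z.
  by rewrite -(Z2_hom_zpow phiM (gone G) 0).
by case; lia.
Qed.

Section GraphFixedPoint.
Variables (V : finType) (adj : rel V).
Hypotheses (adj_sym : symmetric adj) (adj_conn : forall u v : V, connect adj u v).

Lemma exists_two_edge_segment : 3 <= #|V| ->
  exists a b c, [/\ a != c, adj a b & adj b c].
Proof.
move=> V3; have /card_gt1P [x [y [_ _ xy]]] : 1 < #|[set: V]|.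
  by rewrite cardsT; apply: leq_trans V3.
have [w xw] : exists w, adj x w.
  case/connectP: (adj_conn x y) => [[|w s] /= xs y_last].
    by rewrite y_last eqxx in xy.
  by exists w; case/andP: xs.
case: (pickP [pred c | adj w c && (c != x)]) => [c /andP [wc cx] | Nw].
  by exists x, w, c; rewrite eq_sym.
case: (pickP [pred c | adj x c && (c != w)]) => [c /andP [xc cw] | Nx].
  by exists c, x, w; rewrite adj_sym.
have adj_xw u v : adj u v -> u \in [set x; w] -> v \in [set x; w].
  move=> uv; rewrite !inE => /orP [] /eqP def_u; rewrite -def_u in Nx Nw.
    by move: (Nx v); rewrite /= uv => /negbFE ->; rewrite orbT.
  by move: (Nw v); rewrite /= uv => /negbFE ->.
have closed_xw : closed adj (mem [set x; w]).
  by move=> u v uv; apply/idP/idP; apply: adj_xw; rewrite // adj_sym.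
have : [set: V] \subset [set x; w].
  by apply/subsetP=> z _; rewrite -(closed_connect closed_xw (adj_conn x z)) !inE eqxx.
by move/subset_leq_card; rewrite cardsT cards2 => /(leq_trans V3); case: (x != w).
Qed.

Variables (T : Type) (fixes : V -> T -> Prop).
Hypothesis fixes_edge_uniq : forall a b p q, adj a b ->
  fixes a p -> fixes b p -> fixes a q -> fixes b q -> p = q.
Hypothesis fixes_segment : forall a b c, a != c -> adj a b -> adj b c ->
  exists q, [/\ fixes a q, fixes b q & fixes c q].

Lemma fixes_next a b c p : adj a b -> adj b c -> fixes a p -> fixes b p -> fixes c p.
Proof.
move=> ab bc ap bp; have [<- // | ac] := eqVneq a c.
have [q [aq bq cq]] := fixes_segment ac ab bc.
by rewrite (fixes_edge_uniq ab ap bp aq bq).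
Qed.

Lemma fixes_path a b p s : adj a b -> fixes a p -> fixes b p ->
  path adj b s -> fixes (last b s) p.
Proof.
elim: s a b => [|c s IH] a b //= ab ap bp /andP [bc cs].
exact: IH bc bp (fixes_next ab bc ap bp) cs.
Qed.

Lemma exists_common_fixed : 3 <= #|V| -> exists p, forall v, fixes v p.
Proof.
case/exists_two_edge_segment=> a [b [c [ac ab bc]]].
have [p [ap bp _]] := fixes_segment ac ab bc.
exists p => v; case/connectP: (adj_conn b v) => s bs ->.
exact: fixes_path ab ap bp bs.
Qed.

End GraphFixedPoint.

Theorem proposition2p7 (V : finType) (adj : rel V)
  (adj_sym : symmetric adj) (adj_irr : irreflexive adj)
  (conn : forall u v : V, connect adj u v)
  (three : 3 <= #|V|)
  (G : grp) (iota : V -> G) (raag : is_RAAG adj iota)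
  (calG : {set V} -> Prop)
  (h1 : forall D, calG D -> property_F (A_sub iota D))
  (h2 : forall u v w : V, u != w -> adj u v -> adj v w ->
          exists D, calG D /\ u \in D /\ v \in D /\ w \in D) :
  property_F (A_sub iota [set: V]).
Proof.
move=> T E act tree_E act_G.
set S := A_sub iota [set: V].
case: (classic (exists a b x y, S a /\ S b /\ E x y /\
   (free_pair a b \/ free_abelian_pair a b) /\
   act a x = x /\ act a y = y /\ act b x = x /\ act b y = y)) => [? | no_edge];
  [by right | left].
have S_iota v : S (iota v) by apply: gen_in; exists v; rewrite inE.
have sub_S D g : A_sub iota D g -> S g.
  by apply: gen_mono => _ [v [_ ->]]; exists v; rewrite inE.
have fixed_D D : calG D -> exists p, forall g, A_sub iota D g -> act g p = p.
  move=> /h1 /(_ T E act tree_E (tree_action_sub (sub_S D) act_G)) [// | ].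
  case=> a [b [x [y [Da [Db fixed_xy]]]]]; case: no_edge.
  by exists a, b, x, y; split; [exact: sub_S Da | split; [exact: sub_S Db |]].
pose fixes v p := act (iota v) p = p.
have [p fixed_p] : exists p, forall v, fixes v p.
  apply: (exists_common_fixed adj_sym conn _ _ three)
    => [a b p q ab ap bp aq bq | a b c ac ab bc].
    apply: NNPP => pq; have [x [px ax bx]] :=
      tree_fixed_edge act_G tree_E (S_iota a) (S_iota b) pq ap aq bp bq.
    apply: no_edge; exists (iota a), (iota b), p, x.
    by do !split=> //; right; exact: raag_adj_free_abelian adj_irr raag ab.
  have [D [/fixed_D [q fixed_q] [Da [Db Dc]]]] := h2 a b c ac ab bc.
  by exists q; split; apply: fixed_q; apply: gen_in; [exists a | exists b | exists c].
by exists p; apply: (gen_fixed act_G) => _ [v [_ ->]]; apply: fixed_p.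
Qed.
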